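(* Fix $h\in\{2,\dots,H\}$. Let $\hat f=(\hat w,\hat\phi^F_{h-1},\hat\phi^B_h)$, i.e. $\hat f(x,a,x')=\hat w(\hat\phi^F_{h-1}(x),a,\hat\phi^B_h(x'))$, be the empirical square-loss risk minimizer over $\mathcal{F}_N$ on $n$ i.i.d. samples from $D$, and suppose $\mathbb{E}_D[(\hat f(x,a,x')-f^\star(x,a,x'))^2]\le\Delta_{reg}$ where $\Delta_{reg}=\frac{16(\ln|\Phi_N|+N^2|\mathcal{A}|\ln(n)+\ln(2/\delta))}{n}$. Then for each $i\in[N]$, $$\mathbb{E}_{D_{coup}}\big[1\{\hat\phi^B_h(x_1')=i=\hat\phi^B_h(x_2')\}\,|V(x_1',x_2',x,a)|\big]\le8\sqrt{b_i\Delta_{reg}}.$$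
   Context: Block MDP: horizon $H$; finite latent states $\mathcal{S}=\sqcup_h\mathcal{S}_h$; countable observations $\mathcal{X}=\sqcup_h\mathcal{X}_h$; finite actions $\mathcal{A}$; transitions $T(\cdot\mid s,a)\in\Delta(\mathcal{S}_{h+1})$; emissions $q(\cdot\mid s)\in\Delta(\mathcal{X}_h)$ with disjoint supports, decoder $g^\star$; $T(x'\mid x,a)=q(x'\mid g^\star(x'))T(g^\star(x')\mid g^\star(x),a)$. $\Psi_{h-1}$ is a finite set of policies forming an $\alpha$-policy cover of $\mathcal{S}_{h-1}$ (so $\rho_h>0$ on reachable observations). $D$: draw two independent transitions $(x_j,a_j,x_j')$, each by rolling in to $x_j\in\mathcal{X}_{h-1}$ with a uniformly chosen policy of $\Psi_{h-1}$, $a_j\sim\mathrm{Unf}(\mathcal{A})$, $x_j'\sim T(\cdot\mid x_j,a_j)$; with probability $1/2$ output $(x_1,a_1,x_1',1)$, else $(x_1,a_1,x_2',0)$. $D(x,a)$ denotes the marginal of $(x_1,a_1)$ and $\rho_h$ the marginal of $x_1'$ on $\mathcal{X}_h$ (lifted to states by summing). $f^\star(x,a,x')=\frac{T(g^\star(x')\mid g^\star(x),a)}{T(g^\star(x')\mid g^\star(x),a)+\rho_h(g^\star(x'))}$. $D_{coup}$ is the distribution on $(x,a,x_1',x_2')$ with density $D(x,a)\rho_h(x_1')\rho_h(x_2')$. $V(x_1',x_2',x,a)=\frac{T(g^\star(x_1')\mid g^\star(x),a)}{\rho_h(g^\star(x_1'))}-\frac{T(g^\star(x_2')\mid g^\star(x),a)}{\rho_h(g^\star(x_2'))}$.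 $b_i=\mathbb{E}_{x'\sim\rho_h}[1\{\hat\phi^B_h(x')=i\}]$. $\Phi_N$ is a finite class of maps $\mathcal{X}\to[N]$; $\mathcal{W}_N$ all functions $[N]\times\mathcal{A}\times[N]\to[0,1]$; $\mathcal{F}_N=\{(x,a,x')\mapsto w(\phi^F(x),a,\phi^B(x'))\}$; $\delta\in(0,1)$. *)

From HB Require Import structures.
From mathcomp Require Import all_boot all_order all_algebra.
From mathcomp Require Import all_classical all_reals all_analysis.
Set Implicit Arguments. Unset Strict Implicit. Unset Printing Implicit Defensive.
Import Order.TTheory GRing.Theory Num.Theory.
Local Open Scope ring_scope.
Local Open Scope classical_set_scope.

(* Countable sum of a (nonnegative) real function, as a real number.
   Only used for quantities that are finite (bounded by 1) under the
   Block-MDP hypotheses. *)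
Definition csum {R : realType} {T : choiceType} (f : T -> R) : R :=
  fine (\esum_(t in [set: T]) (f t)%:E)%E.

Section BlockMDP.
Variables (R : realType) (H : nat).
Variables (S : finType) (X : countType) (A : finType).
(* layer of a latent state, emission q s x = q(x|s), decoder gstar,
   latent transition T s a s' = T(s'|s,a), initial latent distribution d1 *)
Variables (lay : S -> nat) (q : S -> X -> R) (gstar : X -> S)
          (T : S -> A -> S -> R) (d1 : S -> R).

Definition block_mdp : Prop :=
  [/\ (forall s, 1 <= lay s <= H)%N,
      (forall s x, 0 <= q s x) /\ (forall s x, q s x != 0 -> gstar x = s)
        /\ (forall s, csum (q s) = 1),
      (forall s a s', 0 <= T s a s') /\
        (forall s a, (lay s < H)%N -> \sum_(s' : S) T s a s' = 1) /\
        (forall s a s', T s a s' != 0 -> lay s' = (lay s).+1) &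
      (forall s, 0 <= d1 s) /\ (\sum_(s : S) d1 s = 1) /\
        (forall s, d1 s != 0 -> lay s = 1%N) ].

Definition is_policy (pi : X -> A -> R) : Prop :=
  (forall x a, 0 <= pi x a) /\ (forall x, \sum_(a : A) pi x a = 1).

Definition pibar (pi : X -> A -> R) (s : S) (a : A) : R :=
  csum (fun x => q s x * pi x a).

(* occ pi k s = P^pi(s_k = s), the latent state distribution at layer k *)
Fixpoint occ (pi : X -> A -> R) (k : nat) : S -> R :=
  match k with
  | 0 => fun _ => 0
  | k'.+1 =>
    match k' with
    | 0 => d1
    | _ => fun s' => \sum_(s : S) \sum_(a : A)
                       occ pi k' s * pibar pi s a * T s a s'
    end
  end.

Definition occ_obs (pi : X -> A -> R) (k : nat) (x : X) : R :=
  \sum_(s : S) occ pi k s * q s x.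

Definition policy_cover (I : finType) (Psi : I -> X -> A -> R)
    (alpha : R) (k : nat) : Prop :=
  forall s, lay s = k -> forall pi, is_policy pi ->
    alpha * occ pi k s <= \big[Num.max/0]_(i : I) occ (Psi i) k s.

Definition Tobs (x : X) (a : A) (x' : X) : R :=
  q (gstar x') x' * T (gstar x) a (gstar x').

Section Sampling.
Variables (I : finType) (Psi : I -> X -> A -> R) (h : nat).

(* D(x,a): roll in to X_{h-1} with a uniformly chosen policy of Psi,
   then a uniform action *)
Definition Dxa (x : X) (a : A) : R :=
  ((#|I|%:R)^-1 * \sum_(i : I) occ_obs (Psi i) h.-1 x) / #|A|%:R.

(* rho_h on observations: marginal of x_1' *)
Definition rho_obs (x' : X) : R :=
  csum (fun x => \sum_(a : A) Dxa x a * Tobs x a x').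

Definition rho_st (s : S) : R :=
  csum (fun x' => if gstar x' == s then rho_obs x' else 0).

Definition fstar (x : X) (a : A) (x' : X) : R :=
  T (gstar x) a (gstar x') / (T (gstar x) a (gstar x') + rho_st (gstar x')).

(* density of D on (x, a, x', y): with prob 1/2 a real transition (y = 1),
   otherwise an independent x_2' ~ rho_h (y = 0) *)
Definition Dens (z : X * A * X * bool) : R :=
  let: (x, a, x', y) := z in
  if y then Dxa x a * Tobs x a x' / 2 else Dxa x a * rho_obs x' / 2.

Definition ED (F : X * A * X * bool -> R) : \bar R :=
  (\esum_(z in [set: X * A * X * bool]) (Dens z * F z)%:E)%E.

Definition Vfun (x1' x2' x : X) (a : A) : R :=
  T (gstar x) a (gstar x1') / rho_st (gstar x1')
  - T (gstar x) a (gstar x2') / rho_st (gstar x2').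

Definition EDcoup (F : X * A * X * X -> R) : \bar R :=
  (\esum_(z in [set: X * A * X * X])
     (let: (x, a, x1', x2') := z in
      Dxa x a * rho_obs x1' * rho_obs x2' * F z)%:E)%E.

Definition bucket_mass (N : nat) (phiB : X -> 'I_N) (i : 'I_N) : R :=
  csum (fun x' => if phiB x' == i then rho_obs x' else 0).

End Sampling.
End BlockMDP.

Definition in_WN {R : realType} {A : Type} (N : nat)
    (w : 'I_N -> A -> 'I_N -> R) : Prop :=
  forall j a k, 0 <= w j a k <= 1.

Definition emp_loss {R : realType} {X A : Type} (N n : nat)
    (samples : 'I_n -> X * A * X * bool)
    (w : 'I_N -> A -> 'I_N -> R) (phiF phiB : X -> 'I_N) : R :=
  \sum_(k < n) let: (x, a, x', y) := samples k in
               (w (phiF x) a (phiB x') - (y%:R))^+2.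

Definition Delta_reg {R : realType} (card_Phi N card_A n : nat) (delta : R) : R :=
  16 * (ln (card_Phi%:R) + (N ^ 2 * card_A)%:R * ln (n%:R) + ln (2 / delta))
  / n%:R.

(* Fix a context (x, a) and write t_j, p_j for the latent transition
   probability and the marginal rho_h of the state of x_j', so that
   V = t_1/p_1 - t_2/p_2 and fstar = t/(t+p).  Since
   p_1 p_2 (t_1/p_1 - t_2/p_2) = (t_1+p_1)(t_2+p_2)(fstar_1 - fstar_2) and since the
   regressor w(phiF x, a, .) takes a single value c on bucket i, the triangle
   inequality through c bounds the coupled integrand by
   (T+rho)(x_1') (T+rho)(x_2') (|c - fstar(x_1')| + |c - fstar(x_2')|).  Summing over
   the bucket gives 2 E_{(x,a)}[v u] with v = sum (T+rho) <= 2 and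
   u = sum (T+rho)|c - fstar|.  Cauchy-Schwarz, once inside the bucket and once
   over (x, a), bounds this by 2 * 2 sqrt(E[v] * E[sum (T+rho)(c - fstar)^2]),
   where E[v] <= 2 b_i and the second factor is twice the regression error,
   at most 2 Delta_reg. *)

From HB Require Import structures.
From mathcomp Require Import all_boot all_order all_algebra.
From mathcomp Require Import all_classical all_reals all_analysis.
From mathcomp Require Import ring lra.
Import Order.TTheory GRing.Theory Num.Theory.
Local Open Scope ring_scope.
Local Open Scope classical_set_scope.

Section NonnegativeCsum.
Context {R : realType} {T : choiceType}.
Implicit Types (f g : T -> R) (c : R) (s : seq T).

Lemma esum_le_partial f c : (forall x, 0 <= f x) ->
  (forall s, uniq s -> \sum_(x <- s) f x <= c) ->
  (\esum_(x in [set: T]) (f x)%:E <= c%:E)%E.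
Proof.
move=> f0 fc; apply: ge_ereal_sup => _ [F [finF _] <-].
by rewrite fsbig_finite // sumEFin lee_fin fc // fset_uniq.
Qed.

Lemma partial_le_esum f s : (forall x, 0 <= f x) -> uniq s ->
  ((\sum_(x <- s) f x)%:E <= \esum_(x in [set: T]) (f x)%:E)%E.
Proof.
move=> f0 us; apply: esum_ge; exists [set` s].
  by split => //; exact: finite_set_seq.
by rewrite -fsbig_seq // sumEFin.
Qed.

Lemma summable_nnegE f : (forall x, 0 <= f x) ->
  summable [set: T] (fun x => (f x)%:E) =
  (\esum_(x in [set: T]) (f x)%:E < +oo)%E.
Proof.
by move=> f0; rewrite /summable; under eq_esum do rewrite abse_EFin ger0_norm //.
Qed.

Lemma summable_partial_le f c : (forall x, 0 <= f x) ->
  (forall s, uniq s -> \sum_(x <- s) f x <= c) ->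
  summable [set: T] (fun x => (f x)%:E).
Proof.
by move=> f0 fc; rewrite summable_nnegE //; apply: le_lt_trans (ltry c);
  exact: esum_le_partial.
Qed.

Lemma csum_ge0 f : (forall x, 0 <= f x) -> 0 <= csum f.
Proof. by move=> f0; apply/fine_ge0/esum_ge0 => x _; rewrite lee_fin. Qed.

Lemma csumE f : (forall x, 0 <= f x) -> summable [set: T] (fun x => (f x)%:E) ->
  (csum f)%:E = (\esum_(x in [set: T]) (f x)%:E)%E.
Proof.
move=> f0; rewrite summable_nnegE // => fS; rewrite /csum fineK //.
by rewrite ge0_fin_numE // esum_ge0 // => x _; rewrite lee_fin.
Qed.

Lemma csum_le_partial f c : (forall x, 0 <= f x) ->
  (forall s, uniq s -> \sum_(x <- s) f x <= c) -> csum f <= c.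
Proof.
move=> f0 fc; rewrite -lee_fin csumE //; last exact: summable_partial_le fc.
exact: esum_le_partial.
Qed.

Lemma partial_le_csum f s : (forall x, 0 <= f x) ->
  summable [set: T] (fun x => (f x)%:E) -> uniq s ->
  \sum_(x <- s) f x <= csum f.
Proof. by move=> f0 fS us; rewrite -lee_fin csumE //; exact: partial_le_esum. Qed.

(* [csum] is [fine] of the sum, hence [0] when the sum is infinite. *)
Lemma summable_csum_neq0 f : (forall x, 0 <= f x) -> csum f != 0 ->
  summable [set: T] (fun x => (f x)%:E).
Proof.
rewrite /csum => f0; rewrite summable_nnegE //.
by case: (\esum_(x in [set: T]) (f x)%:E)%E => [r| |]; rewrite ?ltry ?eqxx.
Qed.

Lemma summable_le f g : (forall x, 0 <= f x <= g x) ->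
  summable [set: T] (fun x => (g x)%:E) -> summable [set: T] (fun x => (f x)%:E).
Proof.
move=> fg; have f0 x : 0 <= f x by case/andP: (fg x).
have g0 x : 0 <= g x by case/andP: (fg x) => /le_trans; apply.
rewrite !summable_nnegE //; apply: le_lt_trans; apply: le_esum => x _.
by rewrite lee_fin; case/andP: (fg x).
Qed.

Lemma csum_sum (J : choiceType) (r : seq J) (g : J -> T -> R) :
  (forall j x, 0 <= g j x) -> (forall j, summable [set: T] (fun x => (g j x)%:E)) ->
  csum (fun x => \sum_(j <- r) g j x) = \sum_(j <- r) csum (g j).
Proof.
move=> g0 gS; rewrite /csum; under eq_esum do rewrite -sumEFin.
rewrite esum_sum; last by move=> *; rewrite lee_fin.
by under eq_bigr do rewrite -csumE //; rewrite sumEFin.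
Qed.

Lemma esumZl_nneg f c : (forall x, 0 <= f x) -> 0 <= c ->
  (\esum_(x in [set: T]) (c * f x)%:E =
   c%:E * \esum_(x in [set: T]) (f x)%:E)%E.
Proof.
move=> f0 c0; rewrite /esum -ereal_supZl //; last first.
  by apply/set0P; exists 0%E; exists set0; [exact: fsets_set0 | rewrite fsbig_set0].
congr ereal_sup; apply/seteqP; split => y.
  move=> [F [finF _] <-]; exists (\sum_(x \in F) (f x)%:E)%E; first by exists F.
  rewrite !fsbig_finite // ge0_sume_distrr => [|x _]; last by rewrite lee_fin.
  by under eq_bigr do rewrite EFinM.
move=> [_ [F [finF FT] <-] <-]; exists F => //.
rewrite !fsbig_finite // ge0_sume_distrr => [|x _]; last by rewrite lee_fin.
by under eq_bigr do rewrite EFinM.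
Qed.

Lemma csumZ f c : (forall x, 0 <= f x) -> 0 <= c ->
  csum (fun x => c * f x) = c * csum f.
Proof.
move=> f0 c0; rewrite /csum esumZl_nneg //.
have : (0 <= \esum_(x in [set: T]) (f x)%:E)%E by apply: esum_ge0 => x _; rewrite lee_fin.
case: (\esum_(x in [set: T]) (f x)%:E)%E => [r| |] //= _.
have [->|cn0] := eqVneq c 0; first by rewrite mul0e mul0r.
by rewrite mulry gtr0_sg ?mul1e ?mulr0 // lt_def cn0.
Qed.

End NonnegativeCsum.

Section FiniteSums.
Context {R : rcfType}.

Lemma ler_psum_support {U : eqType} [s s' : seq U] [F : U -> R] :
  uniq s -> uniq s' -> (forall u, 0 <= F u) ->
  {in s, forall u, F u != 0 -> u \in s'} ->
  \sum_(u <- s) F u <= \sum_(u <- s') F u.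
Proof.
move=> us us' F0 ss'; pose t := [seq u <- s | F u != 0].
rewrite (bigID (fun u => F u != 0)) /= [X in _ + X]big1 => [|u /negPn/eqP //].
rewrite addr0 [X in _ <= X](bigID (mem t)) /=.
have -> : \sum_(u <- s' | u \in t) F u = \sum_(u <- s | F u != 0) F u.
  rewrite -big_filter -[RHS]big_filter; apply/perm_big/uniq_perm; rewrite ?filter_uniq // => u.
  by rewrite mem_filter andb_idr // mem_filter => /andP[Fu su]; exact: ss'.
by rewrite lerDl sumr_ge0.
Qed.

Lemma allpairs_pair_uniq (U V : eqType) (s : seq U) (t : seq V) :
  uniq s -> uniq t -> uniq [seq (u, v) | u <- s, v <- t].
Proof. by move=> us ut; apply: allpairs_uniq => // [[? ?] [? ?]] _ _. Qed.

Lemma weighted_cauchy_schwarz {U : Type} (r : seq U) (w u : U -> R) :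
  (forall k, 0 <= w k) ->
  (\sum_(k <- r) w k * u k) ^+ 2 <=
  (\sum_(k <- r) w k) * \sum_(k <- r) w k * u k ^+ 2.
Proof.
move=> w0; elim: r => [|k r IH]; first by rewrite !big_nil; lra.
rewrite !big_cons.
have spread : 0 <= \sum_(j <- r) w j * (u j - u k) ^+ 2.
  by apply: sumr_ge0 => j _; rewrite mulr_ge0 ?sqr_ge0.
have expand : \sum_(j <- r) w j * (u j - u k) ^+ 2 = \sum_(j <- r) w j * u j ^+ 2
    - 2 * u k * \sum_(j <- r) w j * u j + u k ^+ 2 * \sum_(j <- r) w j.
  by elim: r {IH spread} => [|j r IHr]; rewrite ?big_nil ?big_cons ?IHr; ring.
rewrite {}expand in spread.
have := w0 k; move: IH spread.
set A := \sum_(j <- r) w j; set B := \sum_(j <- r) w j * u j.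
set C := \sum_(j <- r) w j * u j ^+ 2 => IH spread wk.
have : 0 <= w k * (C - 2 * u k * B + u k ^+ 2 * A) by apply: mulr_ge0.
nra.
Qed.

Lemma sum_sum_mul_addE (U : Type) (r : seq U) (m e : U -> R) :
  \sum_(i <- r) \sum_(j <- r) m i * m j * (e i + e j) =
  2 * ((\sum_(i <- r) m i) * \sum_(i <- r) m i * e i).
Proof.
under eq_bigr => i _.
  rewrite (eq_bigr (fun j => m i * e i * m j + m i * (m j * e j))); last by move=> *; ring.
  rewrite big_split /= -!mulr_sumr.
over.
by rewrite big_split /= -!mulr_suml; ring.
Qed.

(* Both sides of [t1/p1 - t2/p2 = (t1 p2 - t2 p1) / (p1 p2)] and of
   [t1/(t1+p1) - t2/(t2+p2) = (t1 p2 - t2 p1) / ((t1+p1)(t2+p2))] share the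
   numerator; for [p1 p2 = 0] the left-hand side vanishes. *)
Lemma odds_gap_le [t1 t2 p1 p2 : R] :
  0 <= t1 -> 0 <= t2 -> 0 <= p1 -> 0 <= p2 ->
  p1 * p2 * `|t1 / p1 - t2 / p2| <=
  (t1 + p1) * (t2 + p2) * `|t1 / (t1 + p1) - t2 / (t2 + p2)|.
Proof.
move=> t10 t20 p10 p20.
have [->|p1n0] := eqVneq p1 0; first by rewrite !mul0r !mulr_ge0 ?addr_ge0.
have [->|p2n0] := eqVneq p2 0; first by rewrite mulr0 mul0r !mulr_ge0 ?addr_ge0.
have s1 : t1 + p1 != 0 by rewrite gt_eqF // ltr_wpDl // lt_def p1n0.
have s2 : t2 + p2 != 0 by rewrite gt_eqF // ltr_wpDl // lt_def p2n0.
rewrite -[p1 * p2]ger0_norm ?mulr_ge0 // -normrM.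
rewrite -[(t1 + p1) * _]ger0_norm ?mulr_ge0 ?addr_ge0 // -normrM.
by rewrite le_eqVlt; apply/orP; left; apply/eqP; congr `|_|; field; rewrite ?p1n0 ?p2n0 ?s1 ?s2.
Qed.

Lemma weighted_odds_gap_le (c : R) [q1 q2 t1 t2 p1 p2 : R] :
  0 <= q1 -> 0 <= q2 -> 0 <= t1 -> 0 <= t2 -> 0 <= p1 -> 0 <= p2 ->
  q1 * p1 * (q2 * p2) * `|t1 / p1 - t2 / p2| <=
  (q1 * t1 + q1 * p1) * (q2 * t2 + q2 * p2) *
  (`|c - t1 / (t1 + p1)| + `|c - t2 / (t2 + p2)|).
Proof.
move=> q10 q20 t10 t20 p10 p20.
have -> : q1 * p1 * (q2 * p2) * `|t1 / p1 - t2 / p2| =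
  q1 * q2 * (p1 * p2 * `|t1 / p1 - t2 / p2|) by ring.
have -> : (q1 * t1 + q1 * p1) * (q2 * t2 + q2 * p2) *
    (`|c - t1 / (t1 + p1)| + `|c - t2 / (t2 + p2)|) =
  q1 * q2 * ((t1 + p1) * (t2 + p2) *
    (`|c - t1 / (t1 + p1)| + `|c - t2 / (t2 + p2)|)) by ring.
rewrite ler_wpM2l ?mulr_ge0 //; apply: le_trans (odds_gap_le t10 t20 p10 p20) _.
rewrite ler_wpM2l ?mulr_ge0 ?addr_ge0 // [X in _ <= X]addrC.
have -> : t1 / (t1 + p1) - t2 / (t2 + p2) =
  (c - t2 / (t2 + p2)) - (c - t1 / (t1 + p1)) by ring.
exact: ler_normB.
Qed.

Lemma two_level_cauchy_schwarz {K U : Type} (r : seq K) (G : seq U)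
    (D : K -> R) (m e : K -> U -> R) (c beta delta : R) :
  (forall k, 0 <= D k) -> (forall k x, 0 <= m k x) -> 0 <= c ->
  (forall k, D k != 0 -> \sum_(x <- G) m k x <= c) ->
  \sum_(k <- r) D k * \sum_(x <- G) m k x <= beta ->
  \sum_(k <- r) D k * \sum_(x <- G) m k x * e k x ^+ 2 <= delta ->
  \sum_(k <- r) D k * (\sum_(x <- G) m k x) * (\sum_(x <- G) m k x * e k x)
    <= c * Num.sqrt (beta * delta).
Proof.
move=> D0 m0 c0 vc Dv_beta Dme_delta.
pose v k := \sum_(x <- G) m k x.
have v0 k : 0 <= v k by exact: sumr_ge0.
have Dv0 k : 0 <= D k * v k by exact: mulr_ge0.
have inner k : D k * v k * (\sum_(x <- G) m k x * e k x) ^+ 2 <=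
    c ^+ 2 * (D k * \sum_(x <- G) m k x * e k x ^+ 2).
  have [->|Dn0] := eqVneq (D k) 0; first by rewrite !(mul0r, mulr0).
  apply: le_trans (ler_wpM2l (Dv0 k) (weighted_cauchy_schwarz G (m k) (e k) (m0 k))) _.
  set S := \sum_(x <- G) m k x * e k x ^+ 2.
  have S0 : 0 <= S by apply: sumr_ge0 => x _; rewrite mulr_ge0 ?sqr_ge0.
  rewrite -/(v k) (_ : D k * v k * (v k * S) = v k * v k * (D k * S)); last by ring.
  by rewrite expr2 ler_wpM2r ?mulr_ge0 // ler_pM // vc.
have := weighted_cauchy_schwarz r _ (fun k => \sum_(x <- G) m k x * e k x) Dv0.
rewrite /= -/v => CS.
have {CS} : (\sum_(k <- r) D k * v k * (\sum_(x <- G) m k x * e k x)) ^+ 2 <=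
    c ^+ 2 * (beta * delta).
  apply: le_trans CS _.
  rewrite mulrCA; apply: ler_pM.
  - by apply: sumr_ge0 => k _; exact: Dv0.
  - by apply: sumr_ge0 => k _; rewrite mulr_ge0 ?sqr_ge0.
  - exact: Dv_beta.
  - apply: le_trans (ler_wpM2l (sqr_ge0 c) Dme_delta).
    by rewrite mulr_sumr; apply: ler_sum => k _; exact: inner.
move/ler_wsqrtr; rewrite sqrtr_sqr sqrtrM ?sqr_ge0 // sqrtr_sqr (ger0_norm c0).
exact: le_trans (ler_norm _).
Qed.

End FiniteSums.

Section BlockMDP.
Variables (R : realType) (H : nat) (S : finType) (X : countType) (A : finType)
  (lay : S -> nat) (q : S -> X -> R) (gstar : X -> S)
  (T : S -> A -> S -> R) (d1 : S -> R).
Hypothesis hmdp : block_mdp H lay q gstar T d1.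

Lemma q_ge0 s x : 0 <= q s x.
Proof. by case: hmdp => _ [+ _] _ _; apply. Qed.

Lemma q_supp [s x] : q s x != 0 -> gstar x = s.
Proof. by case: hmdp => _ [_ [+ _]] _ _; apply. Qed.

Lemma csum_q s : csum (q s) = 1.
Proof. by case: hmdp => _ [_ [_ +]] _ _; apply. Qed.

Lemma T_ge0 s a s' : 0 <= T s a s'.
Proof. by case: hmdp => _ _ [+ _] _; apply. Qed.

Lemma sum_T s a : (lay s < H)%N -> \sum_(s' : S) T s a s' = 1.
Proof. by case: hmdp => _ _ [_ [+ _]] _; apply. Qed.

Lemma T_lay [s a s'] : T s a s' != 0 -> lay s' = (lay s).+1.
Proof. by case: hmdp => _ _ [_ [_ +]] _; apply. Qed.

Lemma d1_ge0 s : 0 <= d1 s.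
Proof. by case: hmdp => _ _ _ [+ _]; apply. Qed.

Lemma sum_d1 : \sum_(s : S) d1 s = 1.
Proof. by case: hmdp => _ _ _ [_ [+ _]]. Qed.

Lemma d1_lay [s] : d1 s != 0 -> lay s = 1%N.
Proof. by case: hmdp => _ _ _ [_ [_ +]]; apply. Qed.

Lemma summable_q s : summable [set: X] (fun x => (q s x)%:E).
Proof. by apply: summable_csum_neq0 => [x|]; rewrite ?q_ge0 ?csum_q ?oner_neq0. Qed.

Lemma q_partial_le1 s L : uniq L -> \sum_(x <- L) q s x <= 1.
Proof.
move=> uL; rewrite -(csum_q s); apply: partial_le_csum uL; [exact: q_ge0 | exact: summable_q].
Qed.

Section Occupancy.
Variable pi : X -> A -> R.
Hypothesis hpi : is_policy pi.

Lemma pi_le1 x a : pi x a <= 1.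
Proof.
case: hpi => pi0 /(_ x) <-; rewrite (bigD1 a) //= lerDl.
by apply: sumr_ge0 => ? _; exact: pi0.
Qed.

Lemma pibar_ge0 s a : 0 <= pibar q pi s a.
Proof. by apply: csum_ge0 => x; rewrite mulr_ge0 ?q_ge0 //; case: hpi. Qed.

Lemma sum_pibar s : \sum_(a : A) pibar q pi s a = 1.
Proof.
case: hpi => pi0 pi1; rewrite /pibar -csum_sum => [|a x|a].
- by rewrite -(csum_q s); congr csum; apply: funext => x; rewrite -mulr_sumr pi1 mulr1.
- by rewrite mulr_ge0 ?q_ge0.
apply: summable_le (summable_q s) => x.
by rewrite mulr_ge0 ?q_ge0 //= ler_piMr ?q_ge0 ?pi_le1.
Qed.

Lemma occSS k s' : occ q T d1 pi k.+2 s' =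
  \sum_(s : S) \sum_(a : A) occ q T d1 pi k.+1 s * pibar q pi s a * T s a s'.
Proof. by []. Qed.

Lemma occ_ge0 k s : 0 <= occ q T d1 pi k s.
Proof.
elim: k s => [|[|k] IH] s //; first exact: d1_ge0.
rewrite occSS; apply: sumr_ge0 => s0 _; apply: sumr_ge0 => a _.
by rewrite !mulr_ge0 ?IH ?pibar_ge0 ?T_ge0.
Qed.

Lemma occ_lay [k s] : occ q T d1 pi k s != 0 -> lay s = k.
Proof.
elim: k s => [|[|k] IH] s; [by rewrite eqxx | exact: d1_lay |].
rewrite occSS => o_s; apply/eqP; apply: contraNT o_s => lay_s.
rewrite big1 // => s0 _; rewrite big1 // => a _.
have [->|o_s0] := eqVneq (occ q T d1 pi k.+1 s0) 0; first by rewrite !mul0r.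
have [->|T_s0] := eqVneq (T s0 a s) 0; first by rewrite mulr0.
by move: lay_s; rewrite (T_lay T_s0) (IH _ o_s0) eqxx.
Qed.

Lemma sum_occ [k] : (1 <= k <= H)%N -> \sum_(s : S) occ q T d1 pi k s = 1.
Proof.
elim: k => [|[|k] IH] //; first by rewrite /= sum_d1.
move=> /andP[_ kH]; rewrite -[RHS](IH (ltnW kH)).
under eq_bigr do rewrite occSS.
rewrite exchange_big; apply: eq_bigr => s0 _; rewrite exchange_big.
have [->|o_s0] := eqVneq (occ q T d1 pi k.+1 s0) 0.
  by rewrite big1 // => a _; rewrite big1 // => s' _; rewrite !mul0r.
under eq_bigr do rewrite -mulr_sumr sum_T ?(occ_lay o_s0) // mulr1.
by rewrite -mulr_sumr sum_pibar mulr1.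
Qed.

Lemma occ_obs_ge0 k x : 0 <= occ_obs q T d1 pi k x.
Proof. by apply: sumr_ge0 => s _; rewrite mulr_ge0 ?occ_ge0 ?q_ge0. Qed.

Lemma occ_obs_partial_le1 k L : (1 <= k <= H)%N -> uniq L ->
  \sum_(x <- L) occ_obs q T d1 pi k x <= 1.
Proof.
move=> kH uL; rewrite /occ_obs exchange_big /= -(sum_occ kH).
apply: ler_sum => s _; rewrite -mulr_sumr ler_piMr ?occ_ge0 //.
exact: q_partial_le1.
Qed.

End Occupancy.

Section Sampling.
Variables (I : finType) (Psi : I -> X -> A -> R) (h : nat).
Hypothesis hPsi : forall i, is_policy (Psi i).
Hypothesis hh : (2 <= h <= H)%N.

Local Notation Dx := (Dxa q T d1 Psi h).
Local Notation To := (Tobs q gstar T).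
Local Notation rho := (rho_obs q gstar T d1 Psi h).
Local Notation rhoS := (rho_st q gstar T d1 Psi h).

Lemma Dxa_ge0 x a : 0 <= Dx x a.
Proof.
rewrite /Dxa !mulr_ge0 ?invr_ge0 //.
by apply: sumr_ge0 => i _; exact: occ_obs_ge0 (hPsi i) _ _.
Qed.

Lemma Dxa_lay [x a] : Dx x a != 0 -> lay (gstar x) = h.-1.
Proof.
move=> D_xa; apply/eqP; apply: contraNT D_xa => lay_x.
rewrite /Dxa big1 ?mulr0 ?mul0r // => i _; rewrite /occ_obs big1 // => s _.
have [->|q_sx] := eqVneq (q s x) 0; first by rewrite mulr0.
have [->|o_s] := eqVneq (occ q T d1 (Psi i) h.-1 s) 0; first by rewrite mul0r.
by move: lay_x; rewrite (q_supp q_sx) (occ_lay _ o_s) eqxx.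
Qed.

Lemma Dxa_partial_le1 L : uniq L -> \sum_(x <- L) \sum_(a : A) Dx x a <= 1.
Proof.
have inv_mulr_le1 (n : nat) : (n%:R : R)^-1 * n%:R <= 1.
  by case: n => [|n]; rewrite ?invr0 ?mul0r // mulVf ?pnatr_eq0.
have h1H : (1 <= h.-1 <= H)%N by case/andP: hh; case: h => [|[|k]] //= _ /ltnW.
move=> uL; rewrite exchange_big /=.
apply: le_trans (inv_mulr_le1 #|A|).
apply: (@le_trans _ _ (\sum_(a : A) (#|A|%:R)^-1)); last by rewrite sumr_const mulr_natr; apply: lexx.
apply: ler_sum => a _; rewrite /Dxa -mulr_suml ler_piMl ?invr_ge0 //.
rewrite -mulr_sumr exchange_big /=; apply: le_trans (inv_mulr_le1 #|I|).
rewrite ler_wpM2l ?invr_ge0 //.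
apply: (@le_trans _ _ (\sum_(i : I) 1)); last by rewrite sumr_const; apply: lexx.
by apply: ler_sum => i _; exact: occ_obs_partial_le1 (hPsi i) _ _ h1H uL.
Qed.

Lemma Tobs_ge0 x a x' : 0 <= To x a x'.
Proof. by rewrite /Tobs mulr_ge0 ?q_ge0 ?T_ge0. Qed.

Lemma Tobs_partial_le1 x a L : Dx x a != 0 -> uniq L ->
  \sum_(x' <- L) To x a x' <= 1.
Proof.
move=> /Dxa_lay lay_x uL.
have lay_lt : (lay (gstar x) < H)%N by rewrite lay_x; case/andP: hh; case: h.
have split_state x' : To x a x' = \sum_(s' : S)
    (if s' == gstar x' then q s' x' * T (gstar x) a s' else 0).
  by rewrite -big_mkcond big_pred1_eq.
under eq_bigr do rewrite split_state.
rewrite exchange_big /= -(sum_T _ a lay_lt); apply: ler_sum => s' _.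
apply: (@le_trans _ _ (\sum_(x' <- L) q s' x' * T (gstar x) a s')).
  by apply: ler_sum => x' _; case: ifP => _ //; rewrite mulr_ge0 ?q_ge0 ?T_ge0.
by rewrite -mulr_suml ler_piMl ?T_ge0 ?q_partial_le1.
Qed.

Lemma inflow_ge0 x x' : 0 <= \sum_(a : A) Dx x a * To x a x'.
Proof. by apply: sumr_ge0 => a _; rewrite mulr_ge0 ?Dxa_ge0 ?Tobs_ge0. Qed.

Lemma summable_inflow x' :
  summable [set: X] (fun x => (\sum_(a : A) Dx x a * To x a x')%:E).
Proof.
apply: (@summable_partial_le _ _ _ 1) => [x|M uM]; first exact: inflow_ge0.
apply: le_trans (Dxa_partial_le1 _ uM); apply: ler_sum => x _; apply: ler_sum => a _.
have [->|D_xa] := eqVneq (Dx x a) 0; first by rewrite mul0r.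
rewrite ler_piMr ?Dxa_ge0 //.
by have := @Tobs_partial_le1 x a [:: x'] D_xa isT; rewrite big_seq1.
Qed.

Lemma rho_obs_ge0 x' : 0 <= rho x'.
Proof. by apply: csum_ge0 => x; exact: inflow_ge0. Qed.

Lemma inflow_partial_le_rho_obs x' M : uniq M ->
  \sum_(x <- M) \sum_(a : A) Dx x a * To x a x' <= rho x'.
Proof.
move=> uM; apply: partial_le_csum uM => [x|]; [exact: inflow_ge0 | exact: summable_inflow].
Qed.

Lemma rho_obs_partial_le1 L : uniq L -> \sum_(x' <- L) rho x' <= 1.
Proof.
move=> uL; rewrite /rho_obs -csum_sum => [||x']; last exact: summable_inflow.
  apply: csum_le_partial => [x|M uM]; first by apply: sumr_ge0 => x' _; exact: inflow_ge0.
  apply: le_trans (Dxa_partial_le1 _ uM); apply: ler_sum => x _.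
  rewrite exchange_big /=; apply: ler_sum => a _; rewrite -mulr_sumr.
  have [->|D_xa] := eqVneq (Dx x a) 0; first by rewrite mul0r.
  by rewrite ler_piMr ?Dxa_ge0 ?Tobs_partial_le1.
by move=> x' x; exact: inflow_ge0.
Qed.

Lemma summable_rho_obs : summable [set: X] (fun x' => (rho x')%:E).
Proof.
by apply: (@summable_partial_le _ _ _ 1); [exact: rho_obs_ge0 | exact: rho_obs_partial_le1].
Qed.

Lemma rho_obs_factor x' : rho x' =
  q (gstar x') x' * csum (fun x => \sum_(a : A) Dx x a * T (gstar x) a (gstar x')).
Proof.
rewrite /rho_obs -csumZ ?q_ge0 // => [|x]; last first.
  by apply: sumr_ge0 => a _; rewrite mulr_ge0 ?Dxa_ge0 ?T_ge0.
congr csum; apply: funext => x; rewrite mulr_sumr; apply: eq_bigr => a _.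
by rewrite /Tobs mulrCA.
Qed.

Lemma rho_obsE x' : rho x' = q (gstar x') x' * rhoS (gstar x').
Proof.
set s := gstar x'; pose P := csum (fun x => \sum_(a : A) Dx x a * T (gstar x) a s).
have -> : rhoS s = P.
  rewrite /rho_st (_ : (fun y => _) = (fun y => P * q s y)) ?csumZ ?csum_q ?mulr1 //.
  - exact: q_ge0.
  - by apply: csum_ge0 => x; apply: sumr_ge0 => a _; rewrite mulr_ge0 ?Dxa_ge0 ?T_ge0.
  apply: funext => y; case: eqP => [ys|ne]; first by rewrite rho_obs_factor ys mulrC.
  by have [->|/q_supp] := eqVneq (q s y) 0; [rewrite mulr0 | move/ne].
exact: (rho_obs_factor x').
Qed.

Lemma rho_st_ge0 s : 0 <= rhoS s.
Proof.
by apply: csum_ge0 => x'; case: ifP => _; rewrite ?rho_obs_ge0.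
Qed.

Lemma partial_le_bucket_mass [N] [phiB : X -> 'I_N] [i G] : uniq G ->
  (forall x', x' \in G -> phiB x' = i) ->
  \sum_(x' <- G) rho x' <= bucket_mass q gstar T d1 Psi h phiB i.
Proof.
move=> uG G_i; pose f x' := if phiB x' == i then rho x' else 0.
have f0 x' : 0 <= f x' by rewrite /f; case: ifP => _; rewrite ?rho_obs_ge0.
rewrite (eq_big_seq f) => [|x' /G_i]; last by rewrite /f => ->; rewrite eqxx.
apply: partial_le_csum uG => //; apply: summable_le summable_rho_obs => x'.
by rewrite f0 /f; case: ifP => _; rewrite ?lexx ?rho_obs_ge0.
Qed.

Section Bucket.
Variables (N : nat) (phiF phiB : X -> 'I_N) (w : 'I_N -> A -> 'I_N -> R).
Variables (i : 'I_N) (Delta : R).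
Hypothesis hreg : (ED q gstar T d1 Psi h
  (fun z => let: (x, a, x', _) := z in
     (w (phiF x) a (phiB x') - fstar q gstar T d1 Psi h x a x') ^+ 2)%R
  <= Delta%:E)%E.

Local Notation b := (bucket_mass q gstar T d1 Psi h phiB i).

Let mass x a x' := To x a x' + rho x'.
Let err x a x' := `|w (phiF x) a i - fstar q gstar T d1 Psi h x a x'|.

Lemma coupled_weight_ge0 x a x1 x2 : 0 <= Dx x a * rho x1 * rho x2.
Proof. by rewrite mulr_ge0 ?rho_obs_ge0 // mulr_ge0 ?Dxa_ge0 ?rho_obs_ge0. Qed.

Lemma mass_ge0 x a x' : 0 <= mass x a x'.
Proof. by rewrite addr_ge0 ?Tobs_ge0 ?rho_obs_ge0. Qed.

Lemma coupled_integrand_le x a x1 x2 :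
  Dx x a * rho x1 * rho x2 * `|Vfun q gstar T d1 Psi h x1 x2 x a| <=
  Dx x a * (mass x a x1 * mass x a x2 * (err x a x1 + err x a x2)).
Proof.
rewrite /mass /err /Tobs !rho_obsE /Vfun /fstar.
move: (Dx x a) (Dxa_ge0 x a) => D D0; rewrite -!mulrA ler_wpM2l //.
have := weighted_odds_gap_le (w (phiF x) a i) (q_ge0 (gstar x1) x1) (q_ge0 (gstar x2) x2)
  (T_ge0 (gstar x) a (gstar x1)) (T_ge0 (gstar x) a (gstar x2))
  (rho_st_ge0 (gstar x1)) (rho_st_ge0 (gstar x2)).
by rewrite !mulrA.
Qed.

Section BucketPartialSums.
Variables (Mx G : seq X).
Hypotheses (uMx : uniq Mx) (uG : uniq G) (G_i : forall x', x' \in G -> phiB x' = i).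

Lemma bucket_weight_le :
  \sum_(x <- Mx) \sum_(a : A) Dx x a * \sum_(x' <- G) mass x a x' <= 2 * b.
Proof.
have rho_G := partial_le_bucket_mass uG G_i.
have inflow : \sum_(x <- Mx) \sum_(a : A) Dx x a * \sum_(x' <- G) To x a x' <= b.
  apply: le_trans rho_G; under eq_bigr do under eq_bigr do rewrite mulr_sumr.
  under eq_bigr do rewrite exchange_big; rewrite exchange_big /=.
  by apply: ler_sum => x' _; exact: inflow_partial_le_rho_obs.
have marginal : \sum_(x <- Mx) \sum_(a : A) Dx x a * \sum_(x' <- G) rho x' <= b.
  under eq_bigr do rewrite -mulr_suml; rewrite -mulr_suml.
  apply: le_trans rho_G; rewrite ler_piMl ?Dxa_partial_le1 //.
  by apply: sumr_ge0 => x' _; exact: rho_obs_ge0.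
apply: (@le_trans _ _ (b + b)); last by rewrite mulr_natl mulr2n.
apply: le_trans _ (lerD inflow marginal).
rewrite -big_split /=; apply: ler_sum => x _; rewrite -big_split /=.
by apply: ler_sum => a _; rewrite /mass big_split mulrDr.
Qed.

Lemma bucket_regression_le :
  \sum_(x <- Mx) \sum_(a : A) Dx x a * \sum_(x' <- G) mass x a x' * err x a x' ^+ 2
    <= 2 * Delta.
Proof.
(* [Dens] gives each of the two summands of [mass] half of its weight. *)
pose loss (z : X * A * X * bool) := let: (x, a, x', _) := z in
  (w (phiF x) a (phiB x') - fstar q gstar T d1 Psi h x a x') ^+ 2.
pose XA := [seq (x, a) | x <- Mx, a <- index_enum A].
pose L := [seq (p, y) | p <- [seq (k, x') | k <- XA, x' <- G], y <- [:: true; false]].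
have uL : uniq L by rewrite !allpairs_pair_uniq ?index_enum_uniq.
have : \sum_(z <- L) Dens q gstar T d1 Psi h z * loss z <= Delta.
  rewrite -lee_fin; apply: le_trans hreg; apply: partial_le_esum uL.
  move=> [[[x a] x'] y]; rewrite /Dens /loss mulr_ge0 ?sqr_ge0 //.
  by case: y; rewrite divr_ge0 ?ler0n // mulr_ge0 ?Dxa_ge0 ?Tobs_ge0 ?rho_obs_ge0.
rewrite -(ler_pM2l (_ : 0 < 2)) //; apply: le_trans.
rewrite !big_allpairs mulr_sumr; apply: ler_sum => x _.
rewrite mulr_sumr; apply: ler_sum => a _.
rewrite mulr_sumr [X in _ <= X]mulr_sumr big_seq [X in _ <= X]big_seq.
apply: ler_sum => x' /G_i Gx'.
rewrite !big_cons big_nil /= /mass /err Gx' real_normK ?num_real // addr0.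
by rewrite le_eqVlt eq_sym; apply/orP; left; apply/eqP; field.
Qed.

Lemma coupled_bucket_partial_le :
  \sum_(x <- Mx) \sum_(a : A) \sum_(x1 <- G) \sum_(x2 <- G)
    Dx x a * rho x1 * rho x2 * `|Vfun q gstar T d1 Psi h x1 x2 x a|
  <= 8 * Num.sqrt (b * Delta).
Proof.
pose XA := [seq (x, a) | x <- Mx, a <- index_enum A].
have bucket_sum : \sum_(x <- Mx) \sum_(a : A) \sum_(x1 <- G) \sum_(x2 <- G)
    Dx x a * rho x1 * rho x2 * `|Vfun q gstar T d1 Psi h x1 x2 x a| <=
  2 * \sum_(k <- XA) Dx k.1 k.2 * (\sum_(x' <- G) mass k.1 k.2 x')
                      * (\sum_(x' <- G) mass k.1 k.2 x' * err k.1 k.2 x').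
  rewrite big_allpairs mulr_sumr; apply: ler_sum => x _.
  rewrite mulr_sumr; apply: ler_sum => a _.
  rewrite /= -[Dx x a * _ * _]mulrA mulrCA -sum_sum_mul_addE mulr_sumr.
  apply: ler_sum => x1 _.
  by rewrite mulr_sumr; apply: ler_sum => x2 _; exact: coupled_integrand_le.
apply: le_trans bucket_sum _.
have CS := two_level_cauchy_schwarz XA G (fun k => Dx k.1 k.2)
  (fun k => mass k.1 k.2) (fun k => err k.1 k.2) 2 (2 * b) (2 * Delta).
apply: le_trans (ler_wpM2l _ (CS _ _ _ _ _ _)) _ => //.
- by move=> k; exact: Dxa_ge0.
- by move=> k x'; exact: mass_ge0.
- move=> [x a] /= D_xa; rewrite big_split /= -[2]/(1 + 1).
  by rewrite lerD ?rho_obs_partial_le1 ?Tobs_partial_le1.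
- by rewrite big_allpairs; exact: bucket_weight_le.
- by rewrite big_allpairs; exact: bucket_regression_le.
have -> : 2 * b * (2 * Delta) = 2 ^+ 2 * (b * Delta) by ring.
by rewrite sqrtrM ?sqr_ge0 // sqrtr_sqr ger0_norm // !mulrA -!natrM.
Qed.

End BucketPartialSums.

Lemma coupled_bucket_term_ge0 x a x1 x2 :
  0 <= Dx x a * rho x1 * rho x2 *
       ((if (phiB x1 == i) && (phiB x2 == i) then 1 else 0)
        * `|Vfun q gstar T d1 Psi h x1 x2 x a|).
Proof.
rewrite mulr_ge0 ?coupled_weight_ge0 // mulr_ge0 //.
by case: ifP => _; rewrite ?ler01 ?lexx.
Qed.

Lemma EDcoup_bucket_le :
  (EDcoup q gstar T d1 Psi h
     (fun z => let: (x, a, x1', x2') := z in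
       (if (phiB x1' == i) && (phiB x2' == i) then 1 else 0)
       * `|Vfun q gstar T d1 Psi h x1' x2' x a|)%R
   <= (8 * Num.sqrt (b * Delta))%:E)%E.
Proof.
apply: esum_le_partial => [[[[x a] x1] x2]|s us]; first exact: coupled_bucket_term_ge0.
pose Mx := undup [seq z.1.1.1 | z <- s].
pose G := undup [seq x' <- [seq z.1.2 | z <- s] ++ [seq z.2 | z <- s] | phiB x' == i].
have G_i x' : x' \in G -> phiB x' = i by rewrite mem_undup mem_filter => /andP[/eqP].
apply: le_trans _ (coupled_bucket_partial_le Mx G (undup_uniq _) (undup_uniq _) G_i).
pose XA := [seq (x, a) | x <- Mx, a <- index_enum A].
pose L := [seq (p, x2) | p <- [seq (k, x1) | k <- XA, x1 <- G], x2 <- G].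
apply: le_trans (ler_psum_support (s' := L) us _ _ _) _.
- by rewrite !allpairs_pair_uniq ?undup_uniq ?index_enum_uniq.
- by move=> [[[x a] x1] x2]; exact: coupled_bucket_term_ge0.
- move=> [[[x a] x1] x2] z_s /=; case: ifP => [/andP[b1 b2] _|]; last first.
    by rewrite mul0r mulr0 eqxx.
  rewrite !allpairs_f // ?mem_undup ?mem_index_enum //.
  + by apply/mapP; exists (x, a, x1, x2).
  + by rewrite mem_filter b1 mem_cat; apply/orP; left; apply/mapP; exists (x, a, x1, x2).
  + by rewrite mem_filter b2 mem_cat; apply/orP; right; apply/mapP; exists (x, a, x1, x2).
rewrite !big_allpairs; apply: ler_sum => x _; apply: ler_sum => a _.
apply: ler_sum => x1 _; apply: ler_sum => x2 _ /=.
rewrite ler_wpM2l ?coupled_weight_ge0 //.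
by case: ifP; rewrite ?mul0r ?mul1r.
Qed.

End Bucket.

End Sampling.
End BlockMDP.

Theorem mainTheorem13
  (R : realType) (H : nat) (S : finType) (X : countType) (A : finType)
  (lay : S -> nat) (q : S -> X -> R) (gstar : X -> S)
  (T : S -> A -> S -> R) (d1 : S -> R)
  (hmdp : block_mdp H lay q gstar T d1)
  (h : nat) (hh : (2 <= h <= H)%N)
  (I : finType) (Psi : I -> X -> A -> R) (alpha : R)
  (hI : (0 < #|I|)%N) (hPsi_inj : injective Psi)
  (hPsi_pol : forall i, is_policy (Psi i))
  (halpha : 0 < alpha)
  (hcover : policy_cover lay q T d1 Psi alpha h.-1)
  (N : nat) (J : finType) (Phi : J -> X -> 'I_N) (hPhi_inj : injective Phi)
  (delta : R) (hdelta : 0 < delta < 1)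
  (n : nat) (hn : (0 < n)%N) (samples : 'I_n -> X * A * X * bool)
  (w_hat : 'I_N -> A -> 'I_N -> R) (jF jB : J)
  (hw : in_WN w_hat)
  (hERM : forall (w : 'I_N -> A -> 'I_N -> R) (jF' jB' : J), in_WN w ->
     emp_loss samples w_hat (Phi jF) (Phi jB)
       <= emp_loss samples w (Phi jF') (Phi jB'))
  (hreg : (ED q gstar T d1 Psi h
            (fun z => let: (x, a, x', _) := z in
                      (w_hat (Phi jF x) a (Phi jB x')
                       - fstar q gstar T d1 Psi h x a x') ^+ 2)%R
           <= (Delta_reg #|J| N #|A| n delta)%:E)%E)
  (i : 'I_N) :
  (EDcoup q gstar T d1 Psi h
     (fun z => let: (x, a, x1', x2') := z in
       (if (Phi jB x1' == i) && (Phi jB x2' == i) then 1 else 0)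
       * `|Vfun q gstar T d1 Psi h x1' x2' x a|)%R
   <= (8 * Num.sqrt (bucket_mass q gstar T d1 Psi h (Phi jB) i
                     * Delta_reg #|J| N #|A| n delta))%:E)%E.
Proof.
exact: EDcoup_bucket_le hmdp _ _ _ hPsi_pol hh _ _ _ _ i _ hreg.
Qed.
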